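(* Let $a, b, n$ be positive integers with $b>1$, $n>1$, and suppose $S_a(b,n)$ is a numerical semigroup (equivalently $\gcd(r_b(n),a)=1$). Then $\{a_1, \ldots, a_n\}$ is the minimal system of generators of $S_a(b,n)$; in particular the embedding dimension of $S_a(b,n)$ is $n$.
   Context: For an integer $\ell \ge 1$, $r_b(\ell) = \sum_{j=0}^{\ell-1} b^j$, and $r_b(0)=0$. For $i \ge 1$, $a_i := r_b(n) + a\, r_b(i-1)$. $S_a(b,n)$ is the submonoid of $\mathbb{N}$ generated by $\{a_i: i\ge 1\}$. The minimal system of generators of a numerical semigroup is the unique generating set no proper subset of which generates it; the embedding dimension is its cardinality. *)

From mathcomp Require Import all_boot.
Set Implicit Arguments. Unset Strict Implicit. Unset Printing Implicit Defensive.

Definition rb (b l : nat) : nat := \sum_(j < l) b ^ j.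

Definition agen (a b n i : nat) : nat := rb b n + a * rb b (i - 1).

Inductive gen (G : nat -> Prop) : nat -> Prop :=
| gen0 : gen G 0
| genS : forall g x, G g -> gen G x -> gen G (g + x).

Definition Sab (a b n : nat) : nat -> Prop :=
  gen (fun y => exists i, 1 <= i /\ y = agen a b n i).

(* A submonoid S of N is a numerical semigroup iff N \ S is finite. *)
Definition numerical_semigroup (S : nat -> Prop) : Prop :=
  exists N, forall x, N <= x -> S x.

Definition generates (G S : nat -> Prop) : Prop := forall x, S x <-> gen G x.

Definition minimal_generators (G S : nat -> Prop) : Prop :=
  generates G S /\
  forall H : nat -> Prop, (forall x, H x -> G x) -> (exists x, G x /\ ~ H x) ->
    ~ generates H S.

From mathcomp Require Import all_boot.
From mathcomp Require Import zify.

Set Implicit Arguments.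
Unset Strict Implicit.
Unset Printing Implicit Defensive.

(* Write R = r_b(n), so that a_i = R + a r_b(i-1) with 0 <= r_b(i-1) < R for
   1 <= i <= n.  Since r_b(i - 1 + n) = r_b(i-1) + b^(i-1) R, every a_i with
   i > n is a_(i-n) plus a multiple of a_1 = R, so a_1, ..., a_n generate.
   A sum of k >= 2 generators has the form k R + a s; if it equalled
   a_i = R + a t with t < R, then a (t - s) = (k - 1) R, and since
   gcd(R, a) = 1 (forced by S being numerical) R would divide 0 < t - s < R. *)

Lemma rb0 b : rb b 0 = 0.
Proof. by rewrite /rb big_ord0. Qed.

Lemma rbS b l : rb b l.+1 = rb b l + b ^ l.
Proof. by rewrite /rb big_ord_recr. Qed.

Lemma rbD b m l : rb b (m + l) = rb b m + b ^ m * rb b l.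
Proof.
elim: l => [|l IH]; first by rewrite addn0 rb0 muln0 addn0.
by rewrite addnS !rbS IH expnD mulnDr addnA.
Qed.

Lemma rb_homo b : 0 < b -> {homo rb b : l m / l < m}.
Proof.
move=> b_gt0; apply: homo_ltn => [? ? ?|l]; first exact: ltn_trans.
by rewrite rbS -[X in X < _]addn0 ltn_add2l expn_gt0 b_gt0.
Qed.

Lemma rb_inj b : 0 < b -> injective (rb b).
Proof. by move=> b_gt0; apply/incn_inj/leq_mono/rb_homo. Qed.

Section Generated.

Variable G : nat -> Prop.

Lemma gen1 g : G g -> gen G g.
Proof. by move=> Gg; rewrite -[g]addn0; apply: genS Gg (gen0 _). Qed.

Lemma gen_add x y : gen G x -> gen G y -> gen G (x + y).
Proof. by elim=> [//|g x' Gg _ IH] Gy; rewrite -addnA; apply: genS Gg (IH Gy). Qed.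

Lemma gen_mul c x : gen G x -> gen G (c * x).
Proof.
move=> Gx; elim: c => [|c IH]; first by rewrite mul0n; apply: gen0.
by rewrite mulSn; apply: gen_add.
Qed.

Lemma gen_dvdn d : (forall g, G g -> d %| g) -> forall x, gen G x -> d %| x.
Proof. by move=> dG x; elim=> [|g x' /dG dg _ dx]; rewrite ?dvdn0 ?dvdn_add. Qed.

Lemma gen_affine_shape R a : (forall g, G g -> exists t, g = R + a * t) ->
  forall y, gen G y -> [\/ y = 0, G y | exists k s, y = k.+2 * R + a * s].
Proof.
move=> GRa y; elim=> [|g x Gg _ [-> | /GRa [t' ->] | [k [s ->]]]].
- by constructor 1.
- by rewrite addn0; constructor 2.
- by have [t ->] := GRa _ Gg; constructor 3; exists 0, (t + t'); lia.
- by have [t ->] := GRa _ Gg; constructor 3; exists k.+1, (t + s); lia.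
Qed.

End Generated.

Lemma gen_sub (G G' : nat -> Prop) : (forall g, G g -> gen G' g) ->
  forall x, gen G x -> gen G' x.
Proof.
move=> GG' x; elim=> [|g x' Gg _ IH]; first exact: gen0.
exact: gen_add (GG' _ Gg) IH.
Qed.

Lemma coprime_comb_unique R a k s t : coprime R a -> 0 < a -> t < R ->
  0 < k -> k * R + a * s = R + a * t -> k = 1 /\ s = t.
Proof.
move=> coRa a_gt0 ltR k_gt0 e.
have [k_le1 | k_gt1] := leqP k 1.
  have k1 : k = 1 by lia.
  by move: e; rewrite k1 mul1n => /addnI /eqP; rewrite eqn_pmul2l // => /eqP.
have e' : a * (t - s) = (k - 1) * R by rewrite mulnBr mulnBl mul1n; lia.
have pos : 0 < t - s.
  rewrite lt0n; apply/eqP => ts0.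
  by move: e'; rewrite ts0 muln0 => /esym/eqP; rewrite muln_eq0; lia.
have : R %| t - s by rewrite -(Gauss_dvdr _ coRa) e' dvdn_mull.
by move/(dvdn_leq pos); lia.
Qed.

Section Generators.

Variables a b n : nat.
Hypothesis b_gt0 : 0 < b.

Local Notation R := (rb b n).
Local Notation A := (agen a b n).

Lemma agen1 : A 1 = R.
Proof. by rewrite /agen subnn rb0 muln0 addn0. Qed.

Lemma agen_inj i j : 0 < a -> 1 <= i -> 1 <= j -> A i = A j -> i = j.
Proof.
by move=> a_gt0 i1 j1 /addnI /eqP; rewrite eqn_pmul2l // => /eqP /(rb_inj b_gt0); lia.
Qed.

Lemma agen_addn i : 1 <= i -> A (i + n) = A i + a * b ^ (i - 1) * A 1.
Proof.
move=> i1; rewrite agen1 /agen (_ : i + n - 1 = i - 1 + n); last by lia.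
by rewrite rbD mulnDr mulnA addnA.
Qed.

Lemma agen_in_gen_first i : 0 < n -> 1 <= i ->
  gen (fun y => exists j, 1 <= j <= n /\ y = A j) (A i).
Proof.
move=> n_gt0; elim/ltn_ind: i => i IH i1.
have [le_in | lt_ni] := leqP i n; first by apply: gen1; exists i; rewrite i1.
rewrite -(subnK (ltnW lt_ni)) agen_addn; last by lia.
apply: gen_add; first by apply: IH; lia.
by apply/gen_mul/gen1; exists 1; rewrite leqnn; split => //; lia.
Qed.

Lemma numerical_Sab_coprime : numerical_semigroup (Sab a b n) -> coprime R a.
Proof.
case=> N SN.
have dS x : Sab a b n x -> gcdn R a %| x.
  apply: gen_dvdn => _ [i [_ ->]].
  by rewrite dvdn_add ?dvdn_gcdl // dvdn_mulr ?dvdn_gcdr.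
have dN := dS _ (SN N (leqnn N)).
have := dS _ (SN N.+1 (leqnSn N)).
by rewrite -addn1 dvdn_addr // dvdn1.
Qed.

Lemma agen_notin_gen (H : nat -> Prop) i : coprime R a -> 0 < a -> 1 <= i <= n ->
  (forall y, H y -> exists j, 1 <= j /\ y = A j) -> ~ H (A i) -> ~ gen H (A i).
Proof.
move=> coRa a_gt0 /andP [i1 le_in] HA HAi genHAi.
have HRa y : H y -> exists t, y = R + a * t.
  by move=> /HA [j [_ ->]]; exists (rb b (j - 1)).
have ltR : rb b (i - 1) < R by apply: rb_homo; lia.
case: (gen_affine_shape HRa genHAi) => [|//|[k [s e]]].
  by rewrite /agen; have := @rb_homo b b_gt0 0 n; rewrite rb0; lia.
by have [] := coprime_comb_unique coRa a_gt0 ltR (ltn0Sn k.+1) (esym e).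
Qed.

End Generators.

Theorem theorem6 (a b n : nat) (ha : 0 < a) (hb : 1 < b) (hn : 1 < n)
  (hS : numerical_semigroup (Sab a b n)) :
  minimal_generators (fun y => exists i, 1 <= i <= n /\ y = agen a b n i) (Sab a b n)
  /\ (forall i j, 1 <= i <= n -> 1 <= j <= n -> agen a b n i = agen a b n j -> i = j).
Proof.
have b_gt0 : 0 < b by lia.
have coRa := numerical_Sab_coprime hS.
split; last by move=> i j /andP [i1 _] /andP [j1 _]; apply: agen_inj.
split.
  move=> x; split; apply: gen_sub => _ [i [i1 ->]].
    by apply: agen_in_gen_first; lia.
  by apply: gen1; exists i; case/andP: i1.
move=> H HG [_ [[i [i_n ->]] HAi]] genH.
apply: (agen_notin_gen b_gt0 coRa ha i_n _ HAi).
- by move=> y /HG [j [/andP [j1 _] ->]]; exists j.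
- by apply/genH/gen1; exists i; case/andP: i_n.
Qed.
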